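(* For any finite alphabet $\mathfrak{G}$, the series $\mathcal{I}(q,t) = \sum_{\mathfrak{s}\preceq\mathfrak{t}} q^{\deg(\mathfrak{s})} t^{\deg(\mathfrak{t})}$ satisfies $\mathcal{I}(q,t) = 1 + t\,\mathcal{R}_\mathfrak{G}\big(\mathcal{I}(q,t) - qt\,\mathcal{R}_\mathfrak{G}(\mathcal{I}(q,t))\big) + qt\,\mathcal{R}_\mathfrak{G}(\mathcal{I}(q,t))$.
   Context: $\mathfrak{G}$ is a finite alphabet (letters with arities $|\mathtt{a}|\geq 1$), and $\mathcal{R}_\mathfrak{G}(t) = \sum_{\mathtt{a}\in\mathfrak{G}} t^{|\mathtt{a}|}$. A $\mathfrak{G}$-tree is either the leaf (the tree with no internal node) or a root decorated by a letter $\mathtt{a}\in\mathfrak{G}$ with $|\mathtt{a}|$ children that are $\mathfrak{G}$-trees; its degree $\deg$ is its number of internal nodes. The $\mathfrak{G}$-prefix poset is the set of $\mathfrak{G}$-trees ordered by $\mathfrak{s}\preceq\mathfrak{t}$ iff $\mathfrak{s}$ is a prefix of $\mathfrak{t}$, i.e. $\mathfrak{t}$ is obtained by grafting some $\mathfrak{G}$-trees onto the leaves of $\mathfrak{s}$. The series $\mathcal{I}(q,t)$ enumerates all intervals $[\mathfrak{s},\mathfrak{t}]$ of this poset, the sum ranging over all pairs of $\mathfrak{G}$-trees with $\mathfrak{s}\preceq\mathfrak{t}$. *)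

From mathcomp Require Import all_boot all_order all_algebra.
From Stdlib Require Import List.
Set Implicit Arguments. Unset Strict Implicit. Unset Printing Implicit Defensive.
Import Order.TTheory GRing.Theory Num.Theory.

(* A raw tree is a Leaf or a Node decorated by a letter with a list of children;
   a G-tree is a raw tree satisfying [gwf ar] (each node labelled by a has
   exactly ar a children). *)
Inductive gtree (A : Type) : Type :=
| Leaf : gtree A
| Node : A -> list (gtree A) -> gtree A.
Arguments Leaf {A}.

Inductive gwf (A : Type) (ar : A -> nat) : gtree A -> Prop :=
| gwf_leaf : gwf ar Leaf
| gwf_node : forall a cs, size cs = ar a -> List.Forall (gwf ar) cs ->
    gwf ar (Node a cs).

Fixpoint deg (A : Type) (t : gtree A) : nat :=
  match t with
  | Leaf => 0
  | Node _ cs => (sumn (map (@deg A) cs)).+1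
  end.

(* s is a prefix of t: t is obtained from s by grafting trees on leaves of s *)
Inductive prefix (A : Type) : gtree A -> gtree A -> Prop :=
| prefix_leaf : forall t, prefix Leaf t
| prefix_node : forall a cs ds, List.Forall2 (@prefix A) cs ds ->
    prefix (Node a cs) (Node a ds).

Definition counts (T : Type) (P : T -> Prop) (k : nat) : Prop :=
  exists l : list T, List.NoDup l /\ (forall x, List.In x l <-> P x)
                     /\ length l = k.

Definition interval_mn (A : Type) (ar : A -> nat) (m n : nat)
  (p : gtree A * gtree A) : Prop :=
  gwf ar p.1 /\ gwf ar p.2 /\ prefix p.1 p.2 /\ deg p.1 = m /\ deg p.2 = n.

(* Formal power series in q,t with integer coefficients: F m n is the
   coefficient of q^m t^n. *)
Definition fps := nat -> nat -> int.

Local Open Scope ring_scope.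

Definition fps_one : fps := fun m n => if (m == 0%N) && (n == 0%N) then 1 else 0.
Definition fps_add (F G : fps) : fps := fun m n => F m n + G m n.
Definition fps_sub (F G : fps) : fps := fun m n => F m n - G m n.
Definition fps_mul (F G : fps) : fps := fun m n =>
  \sum_(i < m.+1) \sum_(j < n.+1) F i j * G (m - i)%N (n - j)%N.
Fixpoint fps_pow (F : fps) (k : nat) : fps :=
  match k with 0 => fps_one | k'.+1 => fps_mul F (fps_pow F k') end.
Definition fps_mulT (F : fps) : fps := fun m n =>
  if n is n'.+1 then F m n' else 0.
Definition fps_mulQT (F : fps) : fps := fun m n =>
  match m, n with m'.+1, n'.+1 => F m' n' | _, _ => 0 end.
Definition fps_R (A : finType) (ar : A -> nat) (F : fps) : fps := fun m n =>
  \sum_(a : A) fps_pow F (ar a) m n.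

(* An interval [s, t] with t = a(t_1, ..., t_k) has either s = leaf or
   s = a(s_1, ..., s_k) with s_i a prefix of t_i; in both cases it is determined
   by the letter a and the k-tuple of intervals [s_i, t_i], where s_i = leaf in
   the first case.  Counting such tuples gives
     I_{m, n+1} = [q^(m-1) t^n] R(I)  for m >= 1,   I_{0, n+1} = [q^0 t^n] R(I).
   Hence the intervals with s <> leaf contribute qt R(I), so that I - qt R(I) is
   the q-free part I(0, t), and the intervals with s = leaf contribute
   t R(I(0, t)). *)

From Stdlib Require Import List.
From Pilot Require Import Defs.
From mathcomp Require Import all_boot all_algebra zify.
Set Implicit Arguments. Unset Strict Implicit. Unset Printing Implicit Defensive.
Import GRing.Theory.

Section Counting.

Variable X : Type.
Implicit Types (P Q : X -> Prop) (x : X).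

Lemma counts_ext P Q k : (forall x, P x <-> Q x) -> counts P k -> counts Q k.
Proof.
move=> PQ [l [l_uniq [l_P l_size]]]; exists l; split=> //; split=> // x.
by rewrite l_P PQ.
Qed.

Lemma counts0 P : (forall x, ~ P x) -> counts P 0.
Proof.
move=> nP; exists nil; split; first exact: NoDup_nil.
by split=> // x; split=> [[]|/nP].
Qed.

Lemma counts1 x0 : counts (fun x => x = x0) 1.
Proof.
exists (x0 :: nil); split; first by apply: NoDup_cons => //; apply: NoDup_nil.
by split=> // x /=; split=> [[<-|[]]|->] //; left.
Qed.

Lemma counts_disjointU P Q a b :
  (forall x, P x -> Q x -> False) -> counts P a -> counts Q b ->
  counts (fun x => P x \/ Q x) (a + b).
Proof.
move=> PQ0 [l [l_uniq [l_P <-]]] [l' [l'_uniq [l'_Q <-]]].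
exists (l ++ l'); split.
  by apply: NoDup_app => // x /l_P Px /l'_Q; apply: PQ0.
by split=> [x|]; rewrite ?in_app_iff ?l_P ?l'_Q // length_app.
Qed.

Lemma counts_bigU_seq (I : eqType) (s : seq I) (P : I -> X -> Prop) c :
  uniq s -> (forall i i' x, P i x -> P i' x -> i = i') ->
  (forall i, i \in s -> counts (P i) (c i)) ->
  counts (fun x => exists2 i, i \in s & P i x) (\sum_(i <- s) c i).
Proof.
move=> + P_inj; elim: s => [_ _|i0 s IHs /= /andP[i0_s s_uniq] cP].
  by rewrite big_nil; apply: counts0 => x [].
rewrite big_cons; apply: (@counts_ext (fun x => P i0 x \/ exists2 i, i \in s & P i x)).
  move=> x; split=> [[Px|[i i_s Px]]|[i]]; first by exists i0; rewrite ?inE ?eqxx.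
    by exists i; rewrite // inE i_s orbT.
  by rewrite inE => /orP[/eqP->|i_s Px]; [left | right; exists i].
apply: counts_disjointU; last 2 first.
- by apply: cP; rewrite inE eqxx.
- by apply: IHs => // i i_s; apply: cP; rewrite inE i_s orbT.
by move=> x Px [i i_s /(P_inj _ _ _ Px) i0i]; rewrite i0i i_s in i0_s.
Qed.

Lemma counts_bigU (I : finType) (P : I -> X -> Prop) c :
  (forall i i' x, P i x -> P i' x -> i = i') ->
  (forall i, counts (P i) (c i)) ->
  counts (fun x => exists i, P i x) (\sum_i c i).
Proof.
move=> P_inj cP; apply: (@counts_ext (fun x => exists2 i, i \in index_enum I & P i x)).
  by move=> x; split=> [[i _ Px]|[i Px]]; exists i; rewrite ?mem_index_enum.
exact: counts_bigU_seq (index_enum_uniq I) P_inj (fun i _ => cP i).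
Qed.

Lemma counts_image (Y : Type) (f : X -> Y) P k :
  (forall x x', P x -> P x' -> f x = f x' -> x = x') -> counts P k ->
  counts (fun y => exists2 x, P x & y = f x) k.
Proof.
move=> f_inj [l [l_uniq [l_P <-]]]; exists (List.map f l); split.
  by apply: NoDup_map_NoDup_ForallPairs => // x x' /l_P Px /l_P; apply: f_inj.
split=> [y|]; last exact: length_map.
rewrite in_map_iff; split=> [[x [<- /l_P]]|[x /l_P]]; first by exists x.
by move=> lx ->; exists x.
Qed.

Lemma counts_cons P (L : list X -> Prop) a b :
  counts P a -> counts L b ->
  counts (fun l => exists x l', [/\ l = x :: l', P x & L l']) (a * b).
Proof.
move=> [l [l_uniq [l_P <-]]] [ls [ls_uniq [ls_L <-]]].
exists (flat_map (fun x => List.map (cons x) ls) l); split; last split.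
- elim: l l_uniq {l_P} => [_|x l IHl /NoDup_cons_iff[x_l l_uniq]] /=.
    exact: NoDup_nil.
  apply: NoDup_app => [||_ /in_map_iff[l' [<- _]]].
  + by apply: NoDup_map_NoDup_ForallPairs => // ? ? _ _ [].
  + exact: IHl.
  move=> /in_flat_map[y [y_l /in_map_iff[l'' [[yx _] _]]]].
  by rewrite yx in y_l.
- move=> l'; rewrite in_flat_map; split.
    move=> [x [/l_P Px /in_map_iff[l'' [<- /ls_L Ll'']]]].
    by exists x, l''.
  move=> [x [l'' [-> Px Ll'']]]; exists x; split; first exact/l_P.
  by apply/in_map_iff; exists l''; split=> //; apply/ls_L.
- elim: l {l_uniq l_P} => //= x l IHl.
  by rewrite length_app length_map IHl.
Qed.

End Counting.

Section ListFacts.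

Variables X Y : Type.

Lemma List_mapE (f : X -> Y) l : List.map f l = map f l.
Proof. by elim: l => //= x l ->. Qed.

Lemma Forall2_unzip (R : X -> Y -> Prop) l :
  List.Forall (fun p => R p.1 p.2) l -> List.Forall2 R (unzip1 l) (unzip2 l).
Proof. by elim=> [|p l' Rp _ IHl] /=; constructor. Qed.

Lemma Forall_zip (P : X -> Prop) (Q : Y -> Prop) (R : X -> Y -> Prop) cs ds :
  List.Forall2 R cs ds -> List.Forall P cs -> List.Forall Q ds ->
  List.Forall (fun p => [/\ P p.1, Q p.2 & R p.1 p.2]) (zip cs ds).
Proof.
elim=> [|c d cs' ds' Rcd _ IH] /=; first by constructor.
by move=> /Forall_cons_iff[Pc Pcs] /Forall_cons_iff[Qd Qds]; constructor; auto.
Qed.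

End ListFacts.

Section NatSeries.

Implicit Types F G : nat -> nat -> nat.

Definition nfps_mul F G m n :=
  \sum_(i < m.+1) \sum_(j < n.+1) F i j * G (m - i) (n - j).

Fixpoint nfps_pow F k : nat -> nat -> nat :=
  if k is k'.+1 then nfps_mul F (nfps_pow F k')
  else fun m n => (m == 0) && (n == 0).

Lemma nfps_pow_local F G k m n : (forall i j, j <= n -> F i j = G i j) ->
  nfps_pow F k m n = nfps_pow G k m n.
Proof.
elim: k m n => [//|k IHk] m n FG /=.
apply: eq_bigr => i _; apply: eq_bigr => j _.
rewrite FG ?leq_ord ?IHk // => i' j' le_j'.
by apply: FG; rewrite (leq_trans le_j') ?leq_subr.
Qed.

End NatSeries.

Section GradedTuples.

Variables (X : Type) (Q : nat -> nat -> X -> Prop) (d1 d2 : X -> nat).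
Hypothesis Q_grade : forall i j x, Q i j x -> d1 x = i /\ d2 x = j.

Definition graded_tuple k m n (l : list X) :=
  [/\ size l = k, List.Forall (fun x => Q (d1 x) (d2 x) x) l,
      sumn (map d1 l) = m & sumn (map d2 l) = n].

Lemma graded_tuple0 m n l :
  graded_tuple 0 m n l <-> [/\ l = nil, m = 0 & n = 0].
Proof.
split=> [[/size0nil-> _ <- <-] //|[-> -> ->]].
by split=> //; apply: Forall_nil.
Qed.

Lemma graded_tupleS k m n l :
  graded_tuple k.+1 m n l <->
  exists ij : 'I_m.+1 * 'I_n.+1, exists x l',
    [/\ l = x :: l', Q ij.1 ij.2 x & graded_tuple k (m - ij.1) (n - ij.2) l'].
Proof.
split=> [|[[i j] [x [l' [-> /[dup] /Q_grade[/= d1x d2x] Qx [size_l' l'_Q]]]]]].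
  case: l => [|x l'] [//= [size_l'] /Forall_cons_iff[Qx l'_Q] dm dn].
  have lt_d1x : d1 x < m.+1 by rewrite ltnS -dm leq_addr.
  have lt_d2x : d2 x < n.+1 by rewrite ltnS -dn leq_addr.
  by exists (Ordinal lt_d1x, Ordinal lt_d2x), x, l'; split=> //; split=> //=; lia.
rewrite -d1x -d2x => dm dn; split=> /=; rewrite ?size_l' //.
- by apply: Forall_cons; rewrite ?d1x ?d2x.
- by have := ltn_ord i; lia.
- by have := ltn_ord j; lia.
Qed.

Lemma counts_graded_tuple c k m n :
  (forall i j, j <= n -> counts (Q i j) (c i j)) ->
  counts (graded_tuple k m n) (nfps_pow c k m n).
Proof.
elim: k m n => [|k IHk] m n cQ /=.
  case: (boolP ((m == 0) && (n == 0))) => [/andP[/eqP-> /eqP->]|mn_neq0].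
    apply: (counts_ext _ (counts1 nil)) => l.
    by rewrite graded_tuple0; split=> [->|[]].
  apply: counts0 => l /graded_tuple0[_ m0 n0].
  by rewrite m0 n0 in mn_neq0.
rewrite /nfps_mul pair_bigA /=.
apply: (counts_ext (fun l => iff_sym (graded_tupleS k m n l))).
apply: counts_bigU => [[i j] [i' j'] l|[i j]].
  move=> [x [l' [-> /Q_grade[d1x d2x] _]]] [x' [l'' [[<- _] /Q_grade[d1x' d2x'] _]]].
  by congr pair; apply: val_inj; rewrite /= -?d1x -?d2x -?d1x' -?d2x'.
apply: counts_cons; first by apply: cQ; rewrite leq_ord.
by apply: IHk => i' j' le_j'; apply: cQ; rewrite (leq_trans le_j') ?leq_subr.
Qed.

End GradedTuples.

Section Intervals.

Variables (A : finType) (ar : A -> nat).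
Implicit Types (a : A) (l : seq (gtree A * gtree A)).

Local Notation interval_tuple :=
  (graded_tuple (interval_mn ar) (fun p => deg p.1) (fun p => deg p.2)).

Lemma interval_mn_deg i j p : interval_mn ar i j p -> deg p.1 = i /\ deg p.2 = j.
Proof. by case=> [_ [_ [_ []]]]. Qed.

Lemma interval_mn0 i p : interval_mn ar i 0 p <-> p = (Leaf, Leaf) /\ i = 0.
Proof.
split=> [|[-> ->]]; last by repeat constructor.
case: p => s [|a ds] [/= _ [_ [s_t [<- //]]]].
by inversion s_t.
Qed.

(* For [m = 0] the lower tree is the leaf and [l] consists of pairs [(Leaf, t_i)];
   in both cases [m.-1] is the total lower degree of [l]. *)
Definition node_interval m a l :=
  (if m is 0 then Leaf else Node a (unzip1 l), Node a (unzip2 l)).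

Lemma node_interval_mn m n a l :
  interval_tuple (ar a) m.-1 n l -> interval_mn ar m n.+1 (node_interval m a l).
Proof.
move=> [size_l l_int sum1 sum2].
have wf_t : gwf ar (Node a (unzip2 l)).
  constructor; first by rewrite size_map.
  by rewrite /unzip2 /unzip1 -List_mapE Forall_map; apply: Forall_impl l_int => p [_ []].
have deg_t : deg (Node a (unzip2 l)) = n.+1.
  by rewrite /= List_mapE /unzip2 -map_comp sum2.
case: m sum1 => [|m] sum1 /=.
  by repeat split=> //; constructor.
split.
  constructor; first by rewrite size_map.
  by rewrite /unzip2 /unzip1 -List_mapE Forall_map; apply: Forall_impl l_int => p [].
do 2!split=> //=; last by rewrite List_mapE /unzip1 -map_comp sum1.
by constructor; apply: Forall2_unzip; apply: Forall_impl l_int => p [_ [_ []]].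
Qed.

Lemma interval_mn_node_interval m n p :
  interval_mn ar m n.+1 p ->
  exists a l, interval_tuple (ar a) m.-1 n l /\ p = node_interval m a l.
Proof.
case: p => s [|a ds] [wf_s [wf_t [s_t [<- //= [deg_t]]]]].
have [size_ds wf_ds] : size ds = ar a /\ List.Forall (gwf ar) ds.
  by inversion wf_t.
rewrite List_mapE in deg_t; exists a.
case: s wf_s s_t {wf_t} => [|b cs] /= wf_s s_t.
  exists [seq (Leaf, d) | d <- ds]; split; last first.
    by rewrite /node_interval /unzip2 -map_comp map_id.
  split; rewrite ?size_map -?map_comp //.
    rewrite -List_mapE Forall_map; apply: Forall_impl wf_ds => d wf_d.
    by repeat split=> //; constructor.
  by elim: (ds).
have [ba cs_ds] : b = a /\ List.Forall2 (@Defs.prefix A) cs ds by inversion s_t.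
subst b.
have [size_cs wf_cs] : size cs = ar a /\ List.Forall (gwf ar) cs.
  by inversion wf_s.
have unzip_cs : unzip1 (zip cs ds) = cs by rewrite unzip1_zip ?size_cs ?size_ds.
have unzip_ds : unzip2 (zip cs ds) = ds by rewrite unzip2_zip ?size_cs ?size_ds.
exists (zip cs ds); split; last by rewrite /node_interval unzip_cs unzip_ds.
split; rewrite ?size_zip ?size_cs ?size_ds ?minnn //.
- by apply: Forall_impl (Forall_zip cs_ds wf_cs wf_ds) => p [].
- by rewrite map_comp -/(unzip1 _) unzip_cs /= List_mapE.
- by rewrite map_comp -/(unzip2 _) unzip_ds.
Qed.

Lemma lower_leaves l :
  sumn [seq deg p.1 | p <- l] = 0 -> l = [seq (Leaf, t) | t <- unzip2 l].
Proof. by elim: l => [|[[|a cs] t] l IHl] //= /IHl <-. Qed.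

Lemma node_interval_inj m a l l' :
  sumn [seq deg p.1 | p <- l] = m.-1 -> sumn [seq deg p.1 | p <- l'] = m.-1 ->
  node_interval m a l = node_interval m a l' -> l = l'.
Proof.
case: m => [|m] /= sum_l sum_l' [].
  by move=> eq_t; rewrite (lower_leaves sum_l) (lower_leaves sum_l') eq_t.
by move=> eq_s eq_t; rewrite -(zip_unzip l) -(zip_unzip l') eq_s eq_t.
Qed.

(* [interval_table n m j] agrees with [interval_count m j] for [j <= n]: upper
   degree [n + 1] needs the convolution powers of all upper degrees [j <= n]. *)
Fixpoint interval_table n : nat -> nat -> nat :=
  if n is n'.+1 then fun m j =>
    if j <= n' then interval_table n' m j
    else \sum_a nfps_pow (interval_table n') (ar a) m.-1 n'
  else fun m j => (m == 0) && (j == 0).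

Definition interval_count m n := interval_table n m n.

Lemma interval_tableE n m j : j <= n -> interval_table n m j = interval_count m j.
Proof.
elim: n m j => [|n IHn] m j; first by rewrite leqn0 => /eqP->.
rewrite leq_eqVlt ltnS => /orP[/eqP->|le_jn] /=.
  by rewrite ltnn /interval_count /= ltnn.
by rewrite le_jn IHn.
Qed.

Lemma interval_count0 m : interval_count m 0 = (m == 0).
Proof. by rewrite /interval_count /= andbT. Qed.

Lemma interval_countS m n :
  interval_count m n.+1 = \sum_a nfps_pow interval_count (ar a) m.-1 n.
Proof.
rewrite /interval_count /= ltnn; apply: eq_bigr => a _.
by apply: nfps_pow_local => i j; apply: interval_tableE.
Qed.

Lemma counts_interval_mn m n : counts (interval_mn ar m n) (interval_count m n).
Proof.
elim/ltn_ind: n m => -[_|n IHn] m.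
  rewrite interval_count0; case: eqP => [->|m_neq0].
    by apply: (counts_ext _ (counts1 (Leaf, Leaf))) => p; rewrite interval_mn0; split=> [->|[]].
  by apply: counts0 => p /interval_mn0[_ /m_neq0].
rewrite interval_countS.
apply: (@counts_ext _ (fun p => exists a,
  exists2 l, interval_tuple (ar a) m.-1 n l & p = node_interval m a l)).
  move=> p; split=> [[a [l l_int ->]]|/interval_mn_node_interval[a [l []]]].
    exact: node_interval_mn.
  by exists a, l.
apply: counts_bigU => [a a' p [l _ ->] [l' _ []] //|a].
apply: counts_image => [l l' [_ _ sum_l _] [_ _ sum_l' _]|].
  exact: node_interval_inj.
apply: counts_graded_tuple => [i j p|i j le_jn]; first exact: interval_mn_deg.
exact: IHn.
Qed.

End Intervals.

Local Open Scope ring_scope.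

Lemma nfps_powZ (F : nat -> nat -> nat) k m n :
  (nfps_pow F k m n)%:Z = fps_pow (fun i j => (F i j)%:Z) k m n.
Proof.
elim: k m n => [|k IHk] m n /=; first by rewrite /fps_one; case: (_ && _).
rewrite /fps_mul (big_morph Posz PoszD (erefl _)); apply: eq_bigr => i _.
rewrite (big_morph Posz PoszD (erefl _)); apply: eq_bigr => j _.
by rewrite PoszM IHk.
Qed.

Lemma fps_pow_row0 (F G : fps) :
  (forall n, G 0%N n = F 0%N n) -> (forall m n, G m.+1 n = 0) ->
  forall k m n, fps_pow G k m n = if m is 0 then fps_pow F k 0 n else 0.
Proof.
move=> GF0 G0; elim=> [|k IHk] [|m] n //=; rewrite /fps_mul.
  by rewrite !big_ord1; apply: eq_bigr => j _; rewrite GF0 IHk.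
rewrite big1 // => -[[|i] lt_i] _; apply: big1 => j _ /=.
  by rewrite IHk mulr0.
by rewrite G0 mul0r.
Qed.

Section RSeries.

Variables (A : finType) (ar : A -> nat).

Lemma fps_R_row0 (F G : fps) :
  (forall n, G 0%N n = F 0%N n) -> (forall m n, G m.+1 n = 0) ->
  forall m n, fps_R ar G m n = if m is 0 then fps_R ar F 0 n else 0.
Proof.
move=> GF0 G0 [|m] n; rewrite /fps_R.
  by apply: eq_bigr => a _; rewrite (fps_pow_row0 GF0 G0).
by apply: big1 => a _; rewrite (fps_pow_row0 GF0 G0).
Qed.

Lemma interval_count_fps_R m n :
  (interval_count ar m n.+1)%:Z =
  fps_R ar (fun i j => (interval_count ar i j)%:Z) m.-1 n.
Proof.
rewrite interval_countS /fps_R (big_morph Posz PoszD (erefl _)).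
by apply: eq_bigr => a _; rewrite nfps_powZ.
Qed.

End RSeries.

Theorem proposition3p13 (A : finType) (ar : A -> nat)
  (ar_pos : forall a : A, (0 < ar a)%N) :
  exists I : nat -> nat -> nat,
    (forall m n : nat, counts (interval_mn ar m n) (I m n)) /\
    let II : fps := fun m n => ((I m n)%:Z)%R in
    forall m n : nat,
      II m n =
      fps_add (fps_add fps_one
                 (fps_mulT (fps_R ar (fps_sub II (fps_mulQT (fps_R ar II))))))
              (fps_mulQT (fps_R ar II)) m n.
Proof.
exists (interval_count ar); split=> [m n|II]; first exact: counts_interval_mn.
have R_II m n : fps_R ar II m n = II m.+1 n.+1 by rewrite /II interval_count_fps_R.
set D := fps_sub II _.
have R_D : forall m n, fps_R ar D m n = if m is 0 then fps_R ar II 0 n else 0.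
  apply: fps_R_row0 => [n|m [|n]]; rewrite /D /fps_sub /fps_mulQT ?subr0 //.
  by rewrite R_II subrr.
move=> m [|n]; rewrite /fps_add /fps_mulT /fps_mulQT /fps_one.
  by rewrite /II interval_count0 !addr0; case: m.
by rewrite R_D; case: m => [|m]; rewrite ?add0r ?addr0 /II interval_count_fps_R.
Qed.
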